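(* Assume the standing setup with $Z=\mathbb{Z}/p$, $p$ prime. Let $G$ be a profinite group and $N_1\le N_2$ closed normal subgroups of $G$ contained in $\bar T(G)$, with projections $\pi_i\colon G\to G/N_i$. Inflation maps $H^2(G/N_2)_{\pi_2}$ onto $H^2(G/N_1)_{\pi_1}$; let $C_G(N_1,N_2)$ be the kernel of this map. Then there is a perfect bilinear map $$N_2/(N_2\cap N_1T(G))\times C_G(N_1,N_2)\to\mathbb{Z}/p.$$
   Context: Standing setup: all homomorphisms of profinite groups are continuous. For profinite groups $\mathbb{U}$ and $G$, $T^{\mathbb{U}}(G)$ denotes the intersection of the kernels of all continuous homomorphisms $G\to\mathbb{U}$. Fix a finite abelian group $Z$ and a nonempty set $\Omega$ of central extensions of profinite groups $\omega\colon 0\to Z\to\mathbb{U}_\omega\xrightarrow{\lambda_\omega}\bar{\mathbb{U}}_\omega\to1$ such that for every $\omega$: (I) there are finitely many continuous homomorphisms $\gamma_1,\dots,\gamma_n\colon\bar{\mathbb{U}}_\omega\to\mathbb{U}_\omega$ with $\bigcap_i\operatorname{Ker}(\gamma_i)=\{1\}$; (II) $Z$ embeds as a closed subgroup of $\bar{\mathbb{U}}_\omega$. For a profinite group $G$ set $T(G)=\bigcap_{\omega\in\Omega}T^{\mathbb{U}_\omega}(G)$ and $\bar T(G)=\bigcap_{\omega\in\Omega}T^{\bar{\mathbb{U}}_\omega}(G)$. Here $H^i(G)=H^i(G,\mathbb{Z}/p)$ with trivial action. $\alpha_\omega\in H^2(\bar{\mathbb{U}}_\omega)$ is the class of $\omega$,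 and $\bar\rho^*(\alpha_\omega)$ its pullback along $\bar\rho$. For $N\trianglelefteq G$ closed with projection $\pi\colon G\to G/N$, a continuous $\bar\rho\colon G/N\to\bar{\mathbb{U}}_\omega$ is $\pi$-liftable if there is a continuous $\rho\colon G\to\mathbb{U}_\omega$ with $\lambda_\omega\circ\rho=\bar\rho\circ\pi$, and $H^2(G/N)_\pi$ is the subgroup of $H^2(G/N)$ generated by all $\bar\rho^*(\alpha_\omega)$ with $\omega\in\Omega$ and $\bar\rho$ $\pi$-liftable. A bilinear map is perfect if both induced maps to the Pontrjagin duals are isomorphisms. *)

From HB Require Import structures.
From mathcomp Require Import all_boot all_order all_algebra.
From mathcomp Require Import all_classical topology.
Set Implicit Arguments. Unset Strict Implicit. Unset Printing Implicit Defensive.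
Import GRing.Theory.
Local Open Scope ring_scope.
Local Open Scope classical_set_scope.

Record profinite := Profinite {
  pcar :> topologicalType;
  pmul : pcar -> pcar -> pcar;
  pinv : pcar -> pcar;
  pone : pcar;
  pmulA : forall x y z, pmul x (pmul y z) = pmul (pmul x y) z;
  pmul1 : forall x, pmul pone x = x;
  pmulV : forall x, pmul (pinv x) x = pone;
  pmul_cont : continuous (fun xy : pcar * pcar => pmul xy.1 xy.2);
  pinv_cont : continuous pinv;
  p_compact : compact [set: pcar];
  p_hausdorff : hausdorff_space pcar;
  p_tdisc : totally_disconnected [set: pcar] }.

Arguments pmul {_}. Arguments pinv {_}. Arguments pone {_}.

Definition chom (G H : profinite) (f : G -> H) :=
  (forall x y, f (pmul x y) = pmul (f x) (f y)) /\ continuous f.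

Definition closed_normal (G : profinite) (N : set G) :=
  closed N /\ N pone /\ (forall x y, N x -> N y -> N (pmul x y)) /\
  (forall x, N x -> N (pinv x)) /\
  (forall g x, N x -> N (pmul (pmul (pinv g) x) g)).

Definition TU (U G : profinite) : set G :=
  [set x | forall f : G -> U, chom f -> f x = pone].

(* eiota : Z/p -> U is the inclusion of the kernel, ezeta a left inverse of it,
   esec a continuous set-theoretic section of elam (exists for profinite groups;
   it is used only to write down the class alpha_omega, which does not depend on
   the chosen section). *)
Record ext (p : nat) := Ext {
  eU : profinite;
  eUb : profinite;
  elam : eU -> eUb;
  eiota : 'Z_p -> eU;
  ezeta : eU -> 'Z_p;
  esec : eUb -> eU;
  elam_chom : chom elam;
  eiota_hom : forall a b, eiota (a + b) = pmul (eiota a) (eiota b);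
  ezeta_iota : forall a, ezeta (eiota a) = a;
  eker : forall u, elam u = pone <-> exists a, u = eiota a;
  ecentral : forall a u, pmul (eiota a) u = pmul u (eiota a);
  esec_cont : continuous esec;
  esec_sec : forall b, elam (esec b) = b }.
Arguments eU {p} e. Arguments eUb {p} e.
Arguments elam {p} e _. Arguments eiota {p} e _. Arguments ezeta {p} e _.
Arguments esec {p} e _.

(* A normalized-by-section factor set representing alpha_omega in H^2(Ubar, Z/p):
   s(a) s(b) = iota(f(a,b)) s(ab). *)
Definition factor_set p (w : ext p) (a b : eUb w) : 'Z_p :=
  ezeta w (pmul (pmul (esec w a) (esec w b)) (pinv (esec w (pmul a b)))).

Arguments factor_set {p} w _ _.

Definition condI p (w : ext p) :=
  exists n (gs : 'I_n -> eUb w -> eU w),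
    (forall i, chom (gs i)) /\
    (forall x, (forall i, gs i x = pone) -> x = pone).

Definition condII p (w : ext p) :=
  exists j : 'Z_p -> eUb w,
    (forall a b, j (a + b) = pmul (j a) (j b)) /\ injective j /\ closed (range j).

Definition Tset p (Om : ext p -> Prop) (G : profinite) : set G :=
  [set x | forall w, Om w -> @TU (eU w) G x].
Definition Tbar p (Om : ext p -> Prop) (G : profinite) : set G :=
  [set x | forall w, Om w -> @TU (eUb w) G x].
Arguments Tset {p} Om G _. Arguments Tbar {p} Om G _.

(* ---------- Continuous cohomology of G/N with Z/p coefficients ----------
   Continuous cochains on (G/N)^k are encoded as continuous (= locally constant,
   Z/p being discrete) cochains on G^k that are N-invariant in every variable. *)
Definition lc1 (G : profinite) p (g : G -> 'Z_p) :=
  forall x : G, \forall y \near x, g y = g x.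
Definition lc2 (G : profinite) p (f : G -> G -> 'Z_p) :=
  forall xy : G * G, \forall z \near xy, f z.1 z.2 = f xy.1 xy.2.
Definition inv1 (G : profinite) p (N : set G) (g : G -> 'Z_p) :=
  forall x n, N n -> g (pmul x n) = g x.
Definition inv2 (G : profinite) p (N : set G) (f : G -> G -> 'Z_p) :=
  forall x y n m, N n -> N m -> f (pmul x n) (pmul y m) = f x y.
Definition cocycle2 (G : profinite) p (f : G -> G -> 'Z_p) :=
  forall x y z, f y z - f (pmul x y) z + f x (pmul y z) - f x y = 0.
Definition cobound (G : profinite) p (g : G -> 'Z_p) : G -> G -> 'Z_p :=
  fun x y => g y - g (pmul x y) + g x.

Definition Z2 (G : profinite) p (N : set G) (f : G -> G -> 'Z_p) :=
  lc2 f /\ inv2 N f /\ cocycle2 f.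
Definition cohom (G : profinite) p (N : set G) (f h : G -> G -> 'Z_p) :=
  exists g : G -> 'Z_p, lc1 g /\ inv1 N g /\ forall x y, f x y - h x y = cobound g x y.

(* pi-liftable rhobar : G/N -> Ubar, encoded as rhobar o pi : G -> Ubar *)
Definition liftable (G : profinite) p (N : set G) (w : ext p) (rb : G -> eUb w) :=
  chom rb /\ (forall n, N n -> rb n = pone) /\
  exists r : G -> eU w, chom r /\ forall x, elam w (r x) = rb x.

Arguments liftable {G p} N w rb.

Definition pullback (G : profinite) p (w : ext p) (rb : G -> eUb w) : G -> G -> 'Z_p :=
  fun x y => factor_set w (rb x) (rb y).

(* finite sums of the generators rhobar^*(alpha_omega) (Z/p-span) *)
Inductive gen (G : profinite) p (Om : ext p -> Prop) (N : set G) : (G -> G -> 'Z_p) -> Prop :=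
  | gen0 : gen Om N (fun _ _ => 0)
  | genS (w : ext p) (rb : G -> eUb w) c :
      Om w -> liftable N w rb -> gen Om N c ->
      gen Om N (fun x y => c x y + pullback rb x y).

Definition H2pi (G : profinite) p (Om : ext p -> Prop) (N : set G) (f : G -> G -> 'Z_p) :=
  Z2 N f /\ exists h, gen Om N h /\ cohom N f h.

(* cocycles whose class lies in C_G(N1,N2) = ker(inf : H^2(G/N2)_pi2 -> H^2(G/N1)_pi1) *)
Definition CG (G : profinite) p (Om : ext p -> Prop) (N1 N2 : set G) (f : G -> G -> 'Z_p) :=
  H2pi Om N2 f /\ cohom N1 f (fun _ _ => 0).

Definition Mset (G : profinite) p (Om : ext p -> Prop) (N1 N2 : set G) : set G :=
  [set n | N2 n /\ exists a t, N1 a /\ Tset Om G t /\ n = pmul a t].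

(* B : N2/(N2 /\ N1 T(G)) x C_G(N1,N2) -> Z/p is a perfect bilinear map,
   written on representatives (elements of N2, cocycles in CG). *)
Definition perfect_pairing (G : profinite) p (Om : ext p -> Prop) (N1 N2 : set G)
    (B : G -> (G -> G -> 'Z_p) -> 'Z_p) :=
  let C := CG Om N1 N2 in
  let M := Mset Om N1 N2 in
  (forall n n' c, N2 n -> N2 n' -> C c -> M (pmul n (pinv n')) -> B n c = B n' c) /\
  (forall n c c', N2 n -> C c -> C c' -> cohom N2 c c' -> B n c = B n c') /\
  (forall n n' c, N2 n -> N2 n' -> C c -> B (pmul n n') c = B n c + B n' c) /\
  (forall n c c', N2 n -> C c -> C c' -> B n (fun x y => c x y + c' x y) = B n c + B n c') /\
  (forall c, C c -> forall n, N2 n -> \forall m \near n, N2 m -> B m c = B n c) /\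
  (* N2/M -> Hom(C_G, Z/p) is bijective *)
  (forall n, N2 n -> (forall c, C c -> B n c = 0) -> M n) /\
  (forall chi : (G -> G -> 'Z_p) -> 'Z_p,
     (forall c c', C c -> C c' -> cohom N2 c c' -> chi c = chi c') ->
     (forall c c', C c -> C c' -> chi (fun x y => c x y + c' x y) = chi c + chi c') ->
     exists n, N2 n /\ forall c, C c -> chi c = B n c) /\
  (* C_G -> Hom_cont(N2/M, Z/p) is bijective *)
  (forall c, C c -> (forall n, N2 n -> B n c = 0) -> cohom N2 c (fun _ _ => 0)) /\
  (forall psi : G -> 'Z_p,
     (forall n n', N2 n -> N2 n' -> psi (pmul n n') = psi n + psi n') ->
     (forall n, M n -> psi n = 0) ->
     (forall n, N2 n -> \forall m \near n, N2 m -> psi m = psi n) ->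
     exists c, C c /\ forall n, N2 n -> psi n = B n c).

From Pilot Require Import Defs.
From HB Require Import structures.
From mathcomp Require Import all_boot all_order all_algebra.
From mathcomp Require Import all_classical topology.
From mathcomp Require Import ring.
Set Implicit Arguments. Unset Strict Implicit. Unset Printing Implicit Defensive.
Import GRing.Theory.
Local Open Scope ring_scope.
Local Open Scope classical_set_scope.

(* The group operations of Defs (not their homonyms from the libraries). *)
Notation pinv := Defs.pinv.
Notation pmul := Defs.pmul.
Notation pone := Defs.pone.

(* Let c be a cocycle of G/N2 whose inflation to G/N1 is a coboundary, c = δg
   with g : G -> Z/p continuous and N1-invariant.  Since c is N2-invariant in
   both variables, n |-> g n - g 1 is a continuous homomorphism N2 -> Z/p; it
   does not depend on the choice of g, because a continuous homomorphism
   G -> Z/p is trivial on N2 ⊆ T̄(G) (Z/p embeds into every Ū_ω, condition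
   (II)).  This defines the pairing  B(n, c) = g n - g 1.
   For a continuous ρ : G -> U_ω which is Z/p-valued on N2, the pullback of
   α_ω along λ∘ρ is the coboundary of x |-> -ζ(ρ x · s(λ(ρ x))⁻¹), and pairing
   with it is n |-> -ζ(ρ n).  Hence B vanishes on N1 and on T(G), and linear
   combinations of such generators realise many functionals on N2.
   Non-degeneracy on both sides follows by compactness of N1 resp. N2
   (finitely many ρ suffice) and a separation lemma for subgroups of (Z/p)^k. *)

Section GroupIdentities.
Variable G : profinite.
Implicit Types x y z : G.

Lemma pmulVr x : pmul x (pinv x) = pone.
Proof.
rewrite -(pmul1 (pmul x (pinv x))) -(pmulV (pinv x)) -pmulA.
by rewrite (pmulA (pinv x)) pmulV pmul1 pmulV.
Qed.

Lemma pmulr1 x : pmul x pone = x.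
Proof. by rewrite -(pmulV x) pmulA pmulVr pmul1. Qed.

Lemma pmulK x y : pmul (pinv x) (pmul x y) = y.
Proof. by rewrite pmulA pmulV pmul1. Qed.

Lemma pmulKV x y : pmul x (pmul (pinv x) y) = y.
Proof. by rewrite pmulA pmulVr pmul1. Qed.

Lemma pmulIr x y z : pmul y x = pmul z x -> y = z.
Proof. by move=> h; rewrite -(pmulr1 y) -(pmulVr x) pmulA h -pmulA pmulVr pmulr1. Qed.

Lemma pmul_idem x : pmul x x = x -> x = pone.
Proof. by move=> h; apply: (@pmulIr x); rewrite pmul1. Qed.

End GroupIdentities.

Lemma chom1 (G H : profinite) (f : G -> H) : chom f -> f pone = pone.
Proof. by case=> hm _; apply: pmul_idem; rewrite -hm pmul1. Qed.

Lemma chomV (G H : profinite) (f : G -> H) x : chom f -> f (pinv x) = pinv (f x).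
Proof. by move=> hf; apply: (@pmulIr _ (f x)); rewrite -hf.1 !pmulV; exact: chom1. Qed.

Lemma lc_continuous (T U : topologicalType) (f : T -> U) :
  (forall x, \forall y \near x, f y = f x) -> continuous f.
Proof. by move=> h x; apply: cvg_near_cst; exact: h. Qed.

Lemma near_neq (T : topologicalType) : hausdorff_space T ->
  forall q q' : T, q != q' -> \forall z \near q, z != q'.
Proof.
move=> hT q q' hne; case: (pselect (\forall z \near q, z != q')) => // h.
exfalso; move/eqP: hne; apply; apply: hT => A B hA hB; exists q'; split.
  apply: contrapT => nA; apply: h; apply: filterS hA => z Az.
  by apply/eqP => ez; apply: nA; rewrite -ez.
exact: nbhs_singleton.
Qed.

Lemma closed_fibre (T U : topologicalType) (f : T -> U) (v : U) :
  hausdorff_space U -> continuous f -> closed [set x | f x = v].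
Proof.
move=> hU cf x hx; apply: hU => A B hA hB.
have [y [/= fy Ay]] := hx _ (cf x _ hA).
by exists v; split; [rewrite -fy|exact: nbhs_singleton].
Qed.

Lemma closed_lc_preimage (T : topologicalType) V (N : set T) (f : T -> V) (P : set V) :
  closed N -> (forall n, N n -> \forall m \near n, N m -> f m = f n) ->
  closed [set x | N x /\ P (f x)].
Proof.
move=> cN hf x hx.
have Nx : N x by apply: cN => B hB; have [y [[Ny _] By]] := hx B hB; exists y.
by split=> //; have [y [[Ny Py] hy]] := hx _ (hf x Nx); rewrite -hy.
Qed.

Lemma compact_fip (T : topologicalType) (I : Type) (D : I -> Prop) (K : set T)
    (F : I -> set T) :
  compact K -> (forall i, D i -> closed (F i)) ->
  (forall k (s : 'I_k -> I), (forall j, D (s j)) ->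
     exists x, K x /\ forall j, F (s j) x) ->
  exists x, K x /\ forall i, D i -> F i x.
Proof.
move=> cK cF hfin.
have [[i0 Di0]|nD] := pselect (exists i, D i); last first.
  have s0 : 'I_0 -> I by case=> m; rewrite ltn0.
  have [|x [Kx _]] := hfin 0 s0; first by case.
  by exists x; split=> // i Di; exfalso; apply: nD; exists i.
pose I' := {classic I}.
pose g (i : I') := K `&` F i.
have fg : finI (D : set I') g.
  move=> D' sD'; pose s := in_tuple (finmap.enum_fset D').
  have [|x [Kx hx]] := hfin _ (tnth s) => [j|]; first exact/set_mem/sD'/mem_tnth.
  exists x => i /= hi; have /tnthP [j ->] : i \in s := hi.
  by split.
have [|q [Kq clq]] := cK _ (finI_filter fg).
  by exists (g i0); [exact: finI_from1|move=> y []].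
exists q; split=> // j Dj; apply: (cF j Dj) => B hB.
have Fg : filter_from (finI_from (D : set I') g) id (g j).
  by exists (g j) => //; exact: finI_from1.
by have [y [[_ fy] By]] := clq (g j) B Fg hB; exists y.
Qed.

Section Extension.
Variables (p : nat) (w : ext p).
Local Notation io := (eiota w).
Local Notation ze := (ezeta w).
Local Notation s := (esec w).
Local Notation la := (elam w).

Lemma iota0 : io 0 = pone.
Proof. by apply: pmul_idem; rewrite -eiota_hom addr0. Qed.

Lemma ker_iota u : la u = pone -> u = io (ze u).
Proof. by move=> /eker [a ->]; rewrite ezeta_iota. Qed.

Lemma ze_mul u v : la u = pone -> la v = pone -> ze (pmul u v) = ze u + ze v.
Proof. by move=> /ker_iota hu /ker_iota hv; rewrite hu hv -eiota_hom !ezeta_iota. Qed.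

Lemma la_M u v : la (pmul u v) = pmul (la u) (la v).
Proof. exact: (elam_chom w).1. Qed.

Lemma la_V u : la (pinv u) = pinv (la u).
Proof. exact: chomV (elam_chom w). Qed.

Variables (G : profinite) (rb : G -> eUb w) (r : G -> eU w).
Hypotheses (hrb : chom rb) (hr : chom r) (hlift : forall x, la (r x) = rb x).

Definition lift_defect x := pmul (r x) (pinv (s (rb x))).

Lemma lift_defect_ker x : la (lift_defect x) = pone.
Proof. by rewrite /lift_defect la_M la_V hlift esec_sec pmulVr. Qed.

Lemma pullback_cobound x y :
  factor_set w (rb x) (rb y) =
  ze (lift_defect (pmul x y)) - ze (lift_defect x) - ze (lift_defect y).
Proof.
set A := rb x; set B := rb y; set F := factor_set w A B.
have hAB : rb (pmul x y) = pmul A B by rewrite hrb.1.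
have hsAB : pmul (s A) (s B) = pmul (io F) (s (pmul A B)).
  have hk : pmul (pmul (s A) (s B)) (pinv (s (pmul A B))) = io F.
    by apply: ker_iota; rewrite !la_M la_V !esec_sec pmulVr.
  by rewrite -hk -pmulA pmulV pmulr1.
have hdef z : r z = pmul (io (ze (lift_defect z))) (s (rb z)).
  by rewrite -ker_iota ?lift_defect_ker // /lift_defect -pmulA pmulV pmulr1.
have he : lift_defect (pmul x y) =
          io (ze (lift_defect x) + ze (lift_defect y) + F).
  move: (hdef x) (hdef y); rewrite -/A -/B.
  move: (ze (lift_defect x)) (ze (lift_defect y)) => a b hx hy.
  rewrite {1}/lift_defect hr.1 hAB hx hy.
  rewrite -(pmulA (io _) (s A)) (pmulA (s A) (io _)) -ecentral.
  rewrite -(pmulA (io b) (s A) (s B)) hsAB (pmulA (io b) (io F)) -eiota_hom.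
  by rewrite (pmulA (io a)) -eiota_hom -pmulA pmulVr pmulr1 addrA.
by rewrite he ezeta_iota; ring.
Qed.

Lemma lift_defect_shift m x : rb m = pone ->
  ze (lift_defect (pmul x m)) = ze (r m) + ze (lift_defect x).
Proof.
move=> hm; have hk : la (r m) = pone by rewrite hlift.
rewrite -ze_mul ?lift_defect_ker //.
by rewrite /lift_defect hr.1 hrb.1 hm pmulr1 (ker_iota hk) -ecentral -ker_iota // pmulA.
Qed.

Lemma lift_defect_trivial t : rb t = pone -> r t = pone -> lift_defect t = lift_defect pone.
Proof. by move=> h1 h2; rewrite /lift_defect h1 h2 (chom1 hr) (chom1 hrb). Qed.

Lemma lift_defect_cont : continuous lift_defect.
Proof.
move=> x; rewrite /lift_defect.
apply: (@continuous2_cvg _ _ _ _ _ _ r (fun x => pinv (s (rb x))) pmul).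
- exact: (@pmul_cont (eU w) (r x, pinv (s (rb x)))).
- exact: hr.2.
- apply: (@continuous_comp _ _ _ (fun x => s (rb x)) pinv); last exact: pinv_cont.
  by apply: continuous_comp; [exact: hrb.2|exact: esec_cont].
Qed.

End Extension.

(* ζ∘u is locally constant when u is a continuous map into the kernel of λ:
   the finitely many points ι(b) other than u x stay away from u x. *)
Lemma lc1_ker p (w : ext p) (G : profinite) (u : G -> eU w) :
  continuous u -> (forall x, elam w (u x) = pone) -> lc1 (fun x => ezeta w (u x)).
Proof.
move=> cu hu x.
have : \forall y \near x, forall b : 'Z_p, b != ezeta w (u x) -> u y != eiota w b.
  apply: filter_forall => b.
  have [->|hb] := eqVneq b (ezeta w (u x)); first by apply: filterE.
  have hne : u x != eiota w b by apply: contra hb => /eqP ->; rewrite ezeta_iota.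
  have hnear : \forall y \near x, u y != eiota w b.
    exact: (cu x) (near_neq (@p_hausdorff (eU w)) hne).
  by apply: filterS hnear => y hy _.
apply: filterS => y hy /=.
have [//|hb] := eqVneq (ezeta w (u y)) (ezeta w (u x)).
by have := hy _ hb; rewrite -ker_iota ?eqxx.
Qed.

Section Separation.
Variables (p : nat) (p_prime : prime p).
Local Notation Z := 'Z_p.

Lemma Zp_unit (x : Z) : x != 0 -> x \is a GRing.unit.
Proof.
move=> hx; have p1 : (1 < p)%N by apply: prime_gt1.
rewrite -(natr_Zp x) unitZpE // prime_coprime // gtnNdvd //.
  by rewrite lt0n; apply: contra hx => /eqP h; apply/eqP/val_inj.
by have := ltn_ord x; move: (nat_of_ord x) => n; rewrite Zp_cast.
Qed.

Lemma Zp_mulnat (c x : Z) : c * x = x *+ (c : nat).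
Proof. by rewrite -{1}(natr_Zp c) mulr_natl. Qed.

Definition dot k (a u : 'I_k -> Z) := \sum_i a i * u i.
Definition vtail k (u : 'I_k.+1 -> Z) : 'I_k -> Z := fun i => u (lift ord0 i).
Definition vcons k (c : Z) (t : 'I_k -> Z) : 'I_k.+1 -> Z :=
  fun i => if unlift ord0 i is Some j then t j else c.

Lemma vcons0 k c t : @vcons k c t ord0 = c.
Proof. by rewrite /vcons unlift_none. Qed.

Lemma vconsS k c t i : @vcons k c t (lift ord0 i) = t i.
Proof. by rewrite /vcons liftK. Qed.

Lemma vec_eqS k (u u' : 'I_k.+1 -> Z) : u ord0 = u' ord0 -> vtail u = vtail u' -> u = u'.
Proof.
move=> h0 hS; apply: funext => i; case: (unliftP ord0 i) => [j ->|-> //].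
exact: (congr1 (fun t => t j) hS).
Qed.

Lemma dotS k (a u : 'I_k.+1 -> Z) : dot a u = a ord0 * u ord0 + dot (vtail a) (vtail u).
Proof. by rewrite /dot big_ord_recl. Qed.

Lemma dot_vcons k (a : 'I_k.+1 -> Z) c t : dot a (vcons c t) = a ord0 * c + dot (vtail a) t.
Proof. by rewrite dotS vcons0; congr (_ + _); apply: eq_bigr => i _; rewrite /vtail vconsS. Qed.

Lemma dot_vconsl k c t (u : 'I_k.+1 -> Z) : dot (vcons c t) u = c * u ord0 + dot t (vtail u).
Proof. by rewrite dotS vcons0; congr (_ + _); apply: eq_bigr => i _; rewrite /vtail vconsS. Qed.

Lemma dot0r k (a : 'I_k -> Z) : dot a (fun _ => 0) = 0.
Proof. by apply: big1 => i _; rewrite mulr0. Qed.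

Section Subgroup.
Variables (k : nat) (W : ('I_k -> Z) -> Prop).
Hypotheses (W0 : W (fun _ => 0)) (WD : forall u u', W u -> W u' -> W (fun i => u i + u' i)).

Lemma subgroup_scale c u : W u -> W (fun i => c * u i).
Proof.
move=> Wu; under eq_fun do rewrite Zp_mulnat.
elim: (c : nat) => [|n IHn]; first by under eq_fun do rewrite mulr0n.
by under eq_fun do rewrite mulrS; apply: WD.
Qed.

End Subgroup.

(* By induction on k: pick a pivot of W with first coordinate 1
   (or 0 if W lies in the hyperplane u0 = 0) and project along it. *)
Lemma separation k (W : ('I_k -> Z) -> Prop) (v : 'I_k -> Z) :
  W (fun _ => 0) -> (forall u u', W u -> W u' -> W (fun i => u i + u' i)) -> ~ W v ->
  exists a, (forall u, W u -> dot a u = 0) /\ dot a v != 0.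
Proof.
elim: k W v => [|k IH] W v W0 WD nWv.
  by exfalso; apply: nWv; have -> : v = (fun _ => 0) by apply: funext => -[].
have WZ := subgroup_scale W0 WD.
have [pv [Wpv hpv]] : exists pv, W pv /\
    (pv ord0 = 1 \/ (pv = fun _ => 0) /\ forall u, W u -> u ord0 = 0).
  case: (pselect (exists u, W u /\ u ord0 != 0)) => [[u [Wu hu]]|hA].
    exists (fun i => (u ord0)^-1 * u i); split; first exact: WZ.
    by left; rewrite mulVr // Zp_unit.
  exists (fun _ => 0); split=> //; right; split=> // u Wu.
  by apply: contrapT => h; apply: hA; exists u; split=> //; apply/eqP.
have [//|hpiv] : (exists a, (forall u, W u -> dot a u = 0) /\ dot a v != 0) \/
    forall u, W u -> v ord0 = u ord0 + (v ord0 - u ord0) * pv ord0.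
  case: hpv => [pv1|[pv0 hW0]]; first by right=> u _; rewrite pv1 mulr1 addrC subrK.
  have [v0|v0] := eqVneq (v ord0) 0.
    by right=> u Wu; rewrite pv0 mulr0 addr0 v0 hW0.
  have e0 u : dot (vcons 1 (fun _ => 0)) u = u ord0.
    by rewrite dot_vconsl mul1r /dot big1 ?addr0 // => i _; rewrite mul0r.
  left; exists (vcons 1 (fun _ => 0)).
  by split=> [u /hW0|]; rewrite e0.
pose P (u : 'I_k.+1 -> Z) : 'I_k -> Z := fun i => u (lift ord0 i) - u ord0 * pv (lift ord0 i).
have [||[u [Wu ePu]]|a' [ha'W ha'v]] := IH (fun t => exists u, W u /\ t = P u) (P v).
- by exists (fun _ => 0); split=> //; apply: funext => i; rewrite /P mul0r subrr.
- move=> _ _ [u [Wu ->]] [u' [Wu' ->]]; exists (fun i => u i + u' i); split; first exact: WD.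
  by apply: funext => i; rewrite /P mulrDl opprD addrACA.
- apply: nWv; suff -> : v = (fun i => u i + (v ord0 - u ord0) * pv i) by apply: WD => //; exact: WZ.
  apply: vec_eqS; first exact: hpiv.
  apply: funext => i; have /= e := congr1 (fun t => t i) ePu.
  rewrite /vtail -[v (lift ord0 i)](subrK (v ord0 * pv (lift ord0 i))).
  by move: e; rewrite /P => ->; ring.
have key u : dot (vcons (- dot a' (vtail pv)) a') u = dot a' (P u).
  rewrite dot_vconsl /dot /P /vtail.
  under [in RHS]eq_bigr do rewrite mulrBr mulrCA.
  by rewrite sumrB -mulr_sumr mulNr addrC mulrC.
exists (vcons (- dot a' (vtail pv)) a'); split=> [u Wu|]; rewrite key //.
by apply: ha'W; exists u.
Qed.

End Separation.

Section Cochains.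
Variables (G : profinite) (p : nat).

Lemma lc1_cst (a : 'Z_p) : lc1 (fun _ : G => a).
Proof. by move=> x; apply: filterE. Qed.

Lemma lc1_add (g h : G -> 'Z_p) : lc1 g -> lc1 h -> lc1 (fun x => g x + h x).
Proof. by move=> hg hh x; apply: filterS (filterI (hg x) (hh x)) => y [-> ->]. Qed.

Lemma lc1_opp (g : G -> 'Z_p) : lc1 g -> lc1 (fun x => - g x).
Proof. by move=> hg x; apply: filterS (hg x) => y ->. Qed.

Lemma lc1_sub (g h : G -> 'Z_p) : lc1 g -> lc1 h -> lc1 (fun x => g x - h x).
Proof. by move=> hg hh; apply: lc1_add => //; apply: lc1_opp. Qed.

Lemma lc2_cst (a : 'Z_p) : lc2 (fun _ _ : G => a).
Proof. by move=> x; apply: filterE. Qed.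

Lemma lc2_add (f h : G -> G -> 'Z_p) : lc2 f -> lc2 h -> lc2 (fun x y => f x y + h x y).
Proof. by move=> hg hh x; apply: filterS (filterI (hg x) (hh x)) => y [-> ->]. Qed.

Lemma lc2_cobound (g : G -> 'Z_p) : lc1 g -> lc2 (cobound g).
Proof.
move=> hg [x y].
have h1 : \forall z \near (x, y), g z.1 = g x.
  exact: (@cvg_fst _ _ (nbhs x) (nbhs y) _ _ (hg x)).
have h2 : \forall z \near (x, y), g z.2 = g y.
  exact: (@cvg_snd _ _ (nbhs x) (nbhs y) _ _ (hg y)).
have h3 : \forall z \near (x, y), g (pmul z.1 z.2) = g (pmul x y).
  exact: (@pmul_cont G (x, y) _ (hg (pmul x y))).
apply: filterS (filterI h1 (filterI h2 h3)) => z [a [b c]].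
by rewrite /cobound /= a b c.
Qed.

Lemma cobound_cocycle (g : G -> 'Z_p) : cocycle2 (cobound g).
Proof. by move=> x y z; rewrite /cobound pmulA; ring. Qed.

Lemma cocycle_add (f h : G -> G -> 'Z_p) :
  cocycle2 f -> cocycle2 h -> cocycle2 (fun x y => f x y + h x y).
Proof.
move=> hf hh x y z; have e1 := hf x y z; have e2 := hh x y z.
by rewrite -[RHS](addr0 0) -{1}e1 -e2; ring.
Qed.

Lemma cohom_refl (N : set G) (c : G -> G -> 'Z_p) : cohom N c c.
Proof.
exists (fun _ => 0); split; first exact: lc1_cst.
by split=> // x y; rewrite subrr /cobound; ring.
Qed.

Lemma fext2 (f h : G -> G -> 'Z_p) : (forall x y, f x y = h x y) -> f = h.
Proof. by move=> e; apply: funext => x; apply: funext => y. Qed.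

End Cochains.

Section Pairing.
Variables (p : nat) (pp : prime p) (Om : ext p -> Prop) (Om_ne : exists w, Om w)
  (Om_II : forall w, Om w -> condII w)
  (G : profinite) (N1 N2 : set G)
  (hN1 : closed_normal N1) (hN2 : closed_normal N2)
  (N12 : N1 `<=` N2) (N2T : N2 `<=` Tbar Om G).

Local Notation Z := 'Z_p.
Local Notation C := (CG Om N1 N2).
Local Notation M := (Mset Om N1 N2).

Lemma N1_1 : N1 pone. Proof. by case: hN1 => _ []. Qed.
Lemma N1_M x y : N1 x -> N1 y -> N1 (pmul x y). Proof. by case: hN1 => _ [_ [hM _]]; exact: hM. Qed.
Lemma N2_1 : N2 pone. Proof. by case: hN2 => _ []. Qed.
Lemma N2_M x y : N2 x -> N2 y -> N2 (pmul x y). Proof. by case: hN2 => _ [_ [hM _]]; exact: hM. Qed.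
Lemma N2_V x : N2 x -> N2 (pinv x). Proof. by case: hN2 => _ [_ [_ [hV _]]]; exact: hV. Qed.

Lemma N1_compact : compact N1.
Proof. by case: hN1 => cN1 _; exact: (subclosed_compact cN1 (@p_compact G) (@subsetT _ _)). Qed.

Lemma N2_closed : closed N2. Proof. by case: hN2. Qed.

Lemma N2_compact : compact N2.
Proof. exact: (subclosed_compact N2_closed (@p_compact G) (@subsetT _ N2)). Qed.

Lemma Tset1 : Tset Om G pone.
Proof. by move=> w _ f; exact: chom1. Qed.

Lemma M_N1 m : N1 m -> M m.
Proof.
move=> hm; split; first exact: N12.
by exists m, pone; split=> //; split; [exact: Tset1|rewrite pmulr1].
Qed.

Lemma M_T m : N2 m -> Tset Om G m -> M m.
Proof.
by move=> hm ht; split=> //; exists pone, m; split; [exact: N1_1|split=> //; rewrite pmul1].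
Qed.

Lemma sub_eq (a b c d : Z) : a - b = c - d -> c = d -> a = b.
Proof. by move=> h e; apply/eqP; rewrite -subr_eq0 h e subrr. Qed.

Definition charof (g : G -> Z) n := g n - g pone.

Lemma charof_shift (g : G -> Z) : inv2 N2 (cobound g) ->
  forall x n, N2 n -> g (pmul x n) = g x + charof g n.
Proof.
move=> hc x n hn; have := hc x pone pone n N2_1 hn.
rewrite pmul1 pmulr1 /cobound /charof pmulr1 => e.
by apply: (sub_eq _ (esym e)); ring.
Qed.

Lemma charofM (g : G -> Z) : inv2 N2 (cobound g) ->
  forall n m, N2 n -> N2 m -> charof g (pmul n m) = charof g n + charof g m.
Proof. by move=> hc n m hn hm; rewrite {1}/charof (charof_shift hc) // /charof; ring. Qed.

(* A continuous homomorphism k : G -> Z/p is trivial on N2: composed with an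
   embedding Z/p -> Ū_ω (condition (II)) it is killed by N2 ⊆ T̄(G). *)
Lemma hom_trivial_on_N2 (k : G -> Z) : lc1 k -> (forall x y, cobound k x y = 0) ->
  forall n, N2 n -> k n = 0.
Proof.
move=> hk hc n hn; have [w Omw] := Om_ne; have [j [jhom [jinj _]]] := Om_II Omw.
have kM x y : k (pmul x y) = k x + k y.
  by have := hc x y; rewrite /cobound => e; apply: (sub_eq _ (esym e)); ring.
have cf : chom (fun x => j (k x)).
  split=> [x y|]; first by rewrite kM jhom.
  by apply: lc_continuous => x; apply: filterS (hk x) => y ->.
have j0 : j 0 = pone by apply: pmul_idem; rewrite -jhom addr0.
by apply: jinj; rewrite j0; exact: (N2T hn Omw cf).
Qed.

(* Hence charof g on N2 only depends on δg modulo coboundaries of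
   N2-invariant cochains. *)
Lemma charof_unique (g g' h : G -> Z) : lc1 g -> lc1 g' -> lc1 h -> inv1 N2 h ->
  (forall x y, cobound g x y - cobound g' x y = cobound h x y) ->
  forall n, N2 n -> charof g n = charof g' n.
Proof.
move=> hg hg' hh ih e n hn.
pose k x := g x - g' x - h x.
have lk : lc1 k by apply: lc1_sub => //; apply: lc1_sub.
have ck x y : cobound k x y = 0.
  by have := e x y; rewrite /cobound /k => e'; apply: (sub_eq _ e'); ring.
have hn1 : h n = h pone by rewrite -{1}(pmul1 n) ih.
have := hom_trivial_on_N2 lk ck N2_1; have := hom_trivial_on_N2 lk ck hn.
rewrite /charof /k => kn k1; apply/eqP; rewrite -subr_eq0.
have -> : g n - g pone - (g' n - g' pone) =
          (g n - g' n - h n) - (g pone - g' pone - h pone) by rewrite hn1; ring.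
by rewrite kn k1 subrr.
Qed.

Definition trivializes (c : G -> G -> Z) (g : G -> Z) :=
  lc1 g /\ inv1 N1 g /\ forall x y, c x y = cobound g x y.

(* A chosen trivialiser of c (the zero cochain if there is none). *)
Definition trivializer (c : G -> G -> Z) : G -> Z :=
  if pselect (exists g, trivializes c g) is left h then projT1 (cid h) else fun _ => 0.

Lemma trivializerP c : (exists g, trivializes c g) -> trivializes c (trivializer c).
Proof. by rewrite /trivializer => h; case: pselect => [h'|//]; exact: (projT2 (cid h')). Qed.

Definition pairing (n : G) (c : G -> G -> Z) := charof (trivializer c) n.

Lemma C_trivializer c : C c -> trivializes c (trivializer c).
Proof.
move=> [_ [g [hg [ig e]]]]; apply: trivializerP; exists g.
by split=> //; split=> // x y; rewrite -e subr0.
Qed.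

Lemma C_inv2 c : C c -> inv2 N2 (cobound (trivializer c)).
Proof.
move=> hc; have [_ [_ e]] := C_trivializer hc; have [[[_ [ic _]] _] _] := hc.
by move=> x y n m hn hm; rewrite -!e; exact: ic.
Qed.

Lemma pairing_addl n n' c : N2 n -> N2 n' -> C c ->
  pairing (pmul n n') c = pairing n c + pairing n' c.
Proof. by move=> hn hn' hc; rewrite /pairing (charofM (C_inv2 hc)). Qed.

Lemma gen_trivialized h : gen Om N2 h -> exists g0 : G -> Z,
  lc1 g0 /\ (forall x y, h x y = cobound g0 x y) /\
  forall t, N2 t -> Tset Om G t -> g0 t = g0 pone.
Proof.
elim=> [|w rb c Omw [crb [kill [r [cr hl]]]] _ [g0 [lg0 [eg0 tg0]]]].
  by exists (fun _ => 0); split; [exact: lc1_cst|split=> [x y|//]; rewrite /cobound; ring].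
exists (fun x => g0 x - ezeta w (lift_defect rb r x)); split.
  apply: lc1_sub => //; apply: lc1_ker; first exact: lift_defect_cont.
  exact: lift_defect_ker.
split=> [x y|t nt tt].
  by rewrite eg0 /pullback (pullback_cobound crb cr hl) /cobound; ring.
by rewrite tg0 // (lift_defect_trivial crb cr) //; [exact: kill|exact: (tt w Omw)].
Qed.

Lemma pairing_T c : C c -> forall t, N2 t -> Tset Om G t -> pairing t c = 0.
Proof.
move=> hc t nt tt; have [lg [ig eg]] := C_trivializer hc.
have [[_ [h [gh [k [lk [ik ek]]]]]] _] := hc.
have [g0 [lg0 [eg0 tg0]]] := gen_trivialized gh.
rewrite /pairing (@charof_unique _ g0 k) //; first by rewrite /charof tg0 // subrr.
by move=> x y; rewrite -eg -eg0 ek.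
Qed.

Lemma pairing_N1 c : C c -> forall a, N1 a -> pairing a c = 0.
Proof.
move=> hc a na; have [_ [ig _]] := C_trivializer hc.
by rewrite /pairing /charof -{1}(pmul1 a) ig // subrr.
Qed.

Lemma pairing_M c : C c -> forall m, M m -> pairing m c = 0.
Proof.
move=> hc m [nm [a [t [na [tt e]]]]].
have nt : N2 t by rewrite -(pmulK a t) -e; apply: N2_M => //; apply: N2_V; exact: N12.
by rewrite e (pairing_addl (N12 na) nt hc) (pairing_N1 hc na) (pairing_T hc nt tt) addr0.
Qed.

Lemma pairing_wd_left n n' c : N2 n -> N2 n' -> C c -> M (pmul n (pinv n')) ->
  pairing n c = pairing n' c.
Proof.
move=> hn hn' hc hm.
have -> : n = pmul (pmul n (pinv n')) n' by rewrite -pmulA pmulV pmulr1.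
have hnn' : N2 (pmul n (pinv n')) by apply: N2_M => //; exact: N2_V.
by rewrite (pairing_addl hnn' hn' hc) (pairing_M hc hm) add0r.
Qed.

Lemma pairing_wd_right n c c' : N2 n -> C c -> C c' -> cohom N2 c c' ->
  pairing n c = pairing n c'.
Proof.
move=> hn hc hc' [k [lk [ik ek]]].
have [lg [_ eg]] := C_trivializer hc; have [lg' [_ eg']] := C_trivializer hc'.
by rewrite /pairing (@charof_unique _ (trivializer c') k) // => x y; rewrite -eg -eg' ek.
Qed.

Lemma pairing_addr n c c' : N2 n -> C c -> C c' ->
  pairing n (fun x y => c x y + c' x y) = pairing n c + pairing n c'.
Proof.
move=> hn hc hc'.
have [lg [ig eg]] := C_trivializer hc; have [lg' [ig' eg']] := C_trivializer hc'.
pose g x := trivializer c x + trivializer c' x.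
have hs : trivializes (fun x y => c x y + c' x y) g.
  split; first exact: lc1_add.
  split=> [x m hm|x y]; first by rewrite /g ig // ig'.
  by rewrite eg eg' /cobound /g; ring.
have [ls [_ es]] := trivializerP (ex_intro _ _ hs).
rewrite /pairing (@charof_unique _ g (fun _ => 0)) //.
- by rewrite /charof /g; ring.
- exact: lc1_add.
- exact: lc1_cst.
- by move=> x y; rewrite -es eg eg' /cobound /g; ring.
Qed.

Lemma pairing_lc c : C c ->
  forall n, N2 n -> \forall m \near n, N2 m -> pairing m c = pairing n c.
Proof.
move=> hc n hn; have [lg _] := C_trivializer hc.
by apply: filterS (lg n) => m e _; rewrite /pairing /charof e.
Qed.

(* Right non-degeneracy: if c pairs trivially with N2, its trivialiser is
   N2-invariant, so c is already a coboundary on G/N2. *)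
Lemma pairing_nondeg_right c : C c -> (forall n, N2 n -> pairing n c = 0) ->
  cohom N2 c (fun _ _ => 0).
Proof.
move=> hc h0; have [lg [ig eg]] := C_trivializer hc.
exists (trivializer c); split=> //; split=> [x n hn|x y].
  by rewrite (charof_shift (C_inv2 hc)) // -/(pairing n c) h0 // addr0.
by rewrite subr0 eg.
Qed.

Definition lincomb k (a : 'I_k -> Z) (F : 'I_k -> G -> G -> Z) : G -> G -> Z :=
  fun x y => \sum_i a i * F i x y.

Lemma gen_add (N : set G) h h' :
  gen Om N h -> gen Om N h' -> gen Om N (fun x y => h x y + h' x y).
Proof.
move=> gh; elim=> [|w rb c Omw lw gc IH].
  by have -> : (fun x y => h x y + 0) = h by apply: fext2 => x y; rewrite addr0.
have -> : (fun x y => h x y + (c x y + pullback rb x y)) =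
          (fun x y => (h x y + c x y) + pullback rb x y) by apply: fext2 => x y; rewrite addrA.
exact: genS.
Qed.

Lemma gen_muln (N : set G) h n : gen Om N h -> gen Om N (fun x y => h x y *+ n).
Proof.
move=> gh; elim: n => [|n IHn].
  by under eq_fun do under eq_fun do rewrite mulr0n; exact: gen0.
by under eq_fun do under eq_fun do rewrite mulrS; exact: gen_add.
Qed.

Lemma lincombS k (a : 'I_k.+1 -> Z) F :
  lincomb a F = fun x y =>
    F ord0 x y *+ (a ord0 : nat) + lincomb (vtail a) (fun i => F (lift ord0 i)) x y.
Proof. by apply: fext2 => x y; rewrite /lincomb big_ord_recl Zp_mulnat. Qed.

Lemma lincomb0 (a : 'I_0 -> Z) F : lincomb a F = fun _ _ => 0.
Proof. by apply: fext2 => x y; rewrite /lincomb big_ord0. Qed.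

Lemma gen_lincomb (N : set G) k (a : 'I_k -> Z) F :
  (forall i, gen Om N (F i)) -> gen Om N (lincomb a F).
Proof.
elim: k a F => [|k IH] a F hF; first by rewrite lincomb0; exact: gen0.
by rewrite lincombS; apply: gen_add; [exact: gen_muln|exact: IH].
Qed.

Lemma C0 : C (fun _ _ => 0).
Proof.
split; last exact: cohom_refl.
split; last by exists (fun _ _ => 0); split; [exact: gen0|exact: cohom_refl].
by split; [exact: lc2_cst|split=> // x y z; ring].
Qed.

Lemma cohom_add (N : set G) (c c' h h' : G -> G -> Z) :
  cohom N c h -> cohom N c' h' -> cohom N (fun x y => c x y + c' x y) (fun x y => h x y + h' x y).
Proof.
move=> [k [lk [ik ek]]] [k' [lk' [ik' ek']]].
exists (fun x => k x + k' x); split; first exact: lc1_add.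
split=> [x n hn|x y]; first by rewrite ik // ik'.
move: (ek x y) (ek' x y); rewrite /cobound => e1 e2.
by apply: (sub_eq _ (f_equal2 +%R e1 e2)); ring.
Qed.

Lemma C_add c c' : C c -> C c' -> C (fun x y => c x y + c' x y).
Proof.
move=> [[[l1 [i1 y1]] [h [gh ch]]] c1] [[[l1' [i1' y1']] [h' [gh' ch']]] c1'].
split; last by rewrite -[X in cohom _ _ X](fext2 (fun x y => addr0 0)); exact: cohom_add.
split; last by exists (fun x y => h x y + h' x y); split; [exact: gen_add|exact: cohom_add].
split; first exact: lc2_add.
by split; [move=> x y n m hn hm; rewrite i1 // i1'|exact: cocycle_add].
Qed.

Lemma additive0 (Phi : (G -> G -> Z) -> Z) :
  (forall c c', C c -> C c' -> Phi (fun x y => c x y + c' x y) = Phi c + Phi c') ->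
  Phi (fun _ _ => 0) = 0.
Proof.
move=> hPhi; have := hPhi _ _ C0 C0; rewrite (fext2 (fun x y => addr0 (0 : Z))) => e.
by apply: (sub_eq _ (esym e)); ring.
Qed.

Lemma C_lincomb (Phi : (G -> G -> Z) -> Z) :
  (forall c c', C c -> C c' -> Phi (fun x y => c x y + c' x y) = Phi c + Phi c') ->
  forall k (a : 'I_k -> Z) F, (forall i, C (F i)) ->
  C (lincomb a F) /\ Phi (lincomb a F) = dot a (fun i => Phi (F i)).
Proof.
move=> hPhi; have P0 := additive0 hPhi.
have Pn c n : C c -> C (fun x y => c x y *+ n) /\ Phi (fun x y => c x y *+ n) = Phi c *+ n.
  move=> hc; elim: n => [|n [IHC IHP]].
    by under eq_fun do under eq_fun do rewrite mulr0n; rewrite P0 mulr0n; split=> //; exact: C0.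
  under eq_fun do under eq_fun do rewrite mulrS.
  by split; [exact: C_add|rewrite hPhi // IHP mulrS].
elim=> [|k IH] a F hF; first by rewrite lincomb0 /dot big_ord0 P0; split=> //; exact: C0.
rewrite lincombS; have [IHC IHP] := IH (vtail a) (fun i => F (lift ord0 i)) (fun i => hF _).
have [hC hP] := Pn _ (a ord0 : nat) (hF ord0).
split; first exact: C_add.
by rewrite hPhi // IHP hP dotS Zp_mulnat.
Qed.

Definition rep := {w : ext p & G -> eU w}.
Definition valid (f : rep) := Om (projT1 f) /\ chom (projT2 f).
Definition rep_bar (f : rep) : G -> eUb (projT1 f) := fun x => elam (projT1 f) (projT2 f x).
(* The character ζ∘ρ of N2, the cochain trivialising the pullback cocycle, and
   the pullback cocycle itself. *)
Definition rep_char (f : rep) (n : G) : Z := ezeta (projT1 f) (projT2 f n).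
Definition rep_cochain (f : rep) (x : G) : Z :=
  - ezeta (projT1 f) (lift_defect (rep_bar f) (projT2 f) x).
Definition rep_cocycle (f : rep) := pullback (rep_bar f).

Section ValidRep.
Variables (f : rep) (hf : valid f).
Local Notation w := (projT1 f).
Local Notation rho := (projT2 f).

Lemma rep_bar_chom : chom (rep_bar f).
Proof.
have [_ [hm hc]] := hf; split=> [x y|x]; first by rewrite /rep_bar hm la_M.
by apply: continuous_comp; [exact: hc|exact: (elam_chom w).2].
Qed.

Lemma rep_bar_kill n : N2 n -> rep_bar f n = pone.
Proof. by move=> hn; exact: (N2T hn hf.1 rep_bar_chom). Qed.

Lemma rep_char_iota n : N2 n -> rho n = eiota w (rep_char f n).
Proof. by move=> hn; exact: ker_iota (rep_bar_kill hn). Qed.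

Lemma rep_charM n m : N2 n -> N2 m -> rep_char f (pmul n m) = rep_char f n + rep_char f m.
Proof. by move=> hn hm; rewrite /rep_char hf.2.1 ze_mul //; exact: rep_bar_kill. Qed.

Lemma rep_char1 : rep_char f pone = 0.
Proof. by rewrite /rep_char (chom1 hf.2) -(iota0 w) ezeta_iota. Qed.

Lemma rep_cocycle_cobound x y : rep_cocycle f x y = cobound (rep_cochain f) x y.
Proof.
rewrite /rep_cocycle /pullback (pullback_cobound rep_bar_chom hf.2) //.
by rewrite /cobound /rep_cochain; ring.
Qed.

Lemma rep_cochain_lc : lc1 (rep_cochain f).
Proof.
apply: lc1_opp; apply: lc1_ker; first exact: (lift_defect_cont rep_bar_chom hf.2).
exact: lift_defect_ker.
Qed.

Lemma rep_cochain_shift x m : N2 m -> rep_cochain f (pmul x m) = rep_cochain f x - rep_char f m.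
Proof.
move=> hm; rewrite /rep_cochain (lift_defect_shift rep_bar_chom hf.2) ?rep_bar_kill //.
by rewrite /rep_char; ring.
Qed.

Lemma rep_cocycle_gen : gen Om N2 (rep_cocycle f).
Proof.
have -> : rep_cocycle f = fun x y => 0 + pullback (rep_bar f) x y.
  by apply: fext2 => x y; rewrite add0r.
apply: genS; [exact: hf.1| |exact: gen0].
by split; [exact: rep_bar_chom|split; [exact: rep_bar_kill|exists rho; split; [exact: hf.2|]]].
Qed.

Lemma rep_cocycle_inv2 : inv2 N2 (rep_cocycle f).
Proof.
move=> x y n m hn hm; rewrite /rep_cocycle /pullback.
by rewrite !rep_bar_chom.1 (rep_bar_kill hn) (rep_bar_kill hm) !pmulr1.
Qed.

End ValidRep.

Lemma combination_in_C k (F : 'I_k -> rep) (a : 'I_k -> Z) :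
  (forall i, valid (F i)) ->
  (forall m, N1 m -> dot a (fun i => rep_char (F i) m) = 0) ->
  let c := lincomb a (fun i => rep_cocycle (F i)) in
  C c /\ forall n, N2 n -> pairing n c = - dot a (fun i => rep_char (F i) n).
Proof.
move=> hF h1 c; pose g x := \sum_i a i * rep_cochain (F i) x.
have ec x y : c x y = cobound g x y.
  rewrite /c /lincomb /g /cobound -sumrB -big_split /=; apply: eq_bigr => i _.
  by rewrite rep_cocycle_cobound // /cobound; ring.
have lg : lc1 g.
  move=> x; have : \forall y \near x, forall i, rep_cochain (F i) y = rep_cochain (F i) x.
    by apply: filter_forall => i; apply: rep_cochain_lc.
  by apply: filterS => y hy; apply: eq_bigr => i _; rewrite hy.
have gshift x m : N2 m -> g (pmul x m) = g x - dot a (fun i => rep_char (F i) m).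
  by move=> hm; rewrite /g /dot -sumrB; apply: eq_bigr => i _; rewrite rep_cochain_shift //; ring.
have hC : C c.
  split; last first.
    exists g; split=> //; split=> [x m hm|x y]; last by rewrite subr0 ec.
    by rewrite gshift ?h1 ?subr0 //; exact: N12.
  split; last first.
    exists c; split; last exact: cohom_refl.
    by apply: gen_lincomb => i; exact: rep_cocycle_gen.
  split; first by rewrite (fext2 ec); apply: lc2_cobound.
  split; first by move=> x y n m hn hm; apply: eq_bigr => i _; rewrite rep_cocycle_inv2.
  by rewrite (fext2 ec); exact: cobound_cocycle.
split=> // n hn; have [lt [_ et]] := C_trivializer hC.
rewrite /pairing (@charof_unique _ g (fun _ => 0)) //.
- by rewrite /charof -{1}(pmul1 n) gshift //; ring.
- exact: lc1_cst.
- by move=> x y; rewrite -et ec /cobound; ring.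
Qed.

(* If no point of a compact K is identified with n by every valid
   representation (i.e. no a ∈ K has a⁻¹n ∈ T(G)), then already finitely many
   valid representations separate K from n. *)
Lemma finite_reps (K : set G) (n : G) : compact K ->
  ~ (exists a, K a /\ forall w, Om w -> forall rho : G -> eU w, chom rho -> rho a = rho n) ->
  exists k (F : 'I_k -> rep), (forall i, valid (F i)) /\
    ~ exists a, K a /\ forall i, projT2 (F i) a = projT2 (F i) n.
Proof.
move=> cK noa; apply: contrapT => hfin; apply: noa.
pose fibre (r : rep) := [set a | projT2 r a = projT2 r n].
have [||a [Ka ha]] := @compact_fip G (set G) (fun S => exists r, valid r /\ S = fibre r) K id cK.
- by move=> _ [r [[_ hr] ->]]; apply: closed_fibre; [exact: p_hausdorff|exact: hr.2].
- move=> k S hS; pose F j := projT1 (cid (hS j)).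
  have hF j : valid (F j) /\ S j = fibre (F j) := projT2 (cid (hS j)).
  apply: contrapT => nx; apply: hfin; exists k, F; split=> [j|]; first exact: (hF j).1.
  by move=> [a [Ka ha]]; apply: nx; exists a; split=> // j; rewrite (hF j).2; exact: ha.
exists a; split=> // w Omw rho hrho.
by apply: (ha (fibre (existT _ w rho))); exists (existT _ w rho).
Qed.

(* Left non-degeneracy: if n ∉ N1 T(G), finitely many representations ρ_i
   separate n from N1; separating (ζ ρ_i n)_i from the subgroup
   {(ζ ρ_i a)_i | a ∈ N1} yields a combination c ∈ C with B(n, c) ≠ 0. *)
Lemma pairing_nondeg_left n : N2 n -> (forall c, C c -> pairing n c = 0) -> M n.
Proof.
move=> hn hB; apply: contrapT => nM.
have [|k [F [hF noa]]] := @finite_reps N1 n N1_compact.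
  move=> [a [ha hT]]; apply: nM; split=> //; exists a, (pmul (pinv a) n); split=> //.
  split=> [w Omw rho hrho|]; last by rewrite pmulKV.
  by rewrite hrho.1 (chomV _ hrho) (hT w Omw rho hrho) pmulV.
pose W u := exists a, N1 a /\ u = (fun i => rep_char (F i) a).
have [|||al [hal hv]] := separation pp (v := fun i => rep_char (F i) n) (W := W).
- by exists pone; split; [exact: N1_1|apply: funext => i; rewrite rep_char1].
- move=> _ _ [a [ha ->]] [a' [ha' ->]]; exists (pmul a a'); split; first exact: N1_M.
  by apply: funext => i; rewrite rep_charM //; exact: N12.
- move=> [a [ha e]]; apply: noa; exists a; split=> // i.
  by rewrite (rep_char_iota (hF i) hn) (rep_char_iota (hF i) (N12 ha)) (congr1 (fun t => t i) e).
have [hC hBn] := combination_in_C hF (fun m hm => hal _ (ex_intro _ m (conj hm erefl))).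
by move: hv; rewrite -[X in X != _]opprK -hBn // hB // oppr0 eqxx.
Qed.

(* By compactness of N2 it suffices to realise χ on
   finitely many cocycles c_i; otherwise a combination c = Σ a_i c_i
   separating (χ c_i)_i from {(B(m, c_i))_i | m ∈ N2} pairs trivially with
   N2, so c ~ 0 by pairing_nondeg_right, while χ c ≠ 0. *)
Lemma pairing_surj_left (chi : (G -> G -> Z) -> Z) :
  (forall c c', C c -> C c' -> cohom N2 c c' -> chi c = chi c') ->
  (forall c c', C c -> C c' -> chi (fun x y => c x y + c' x y) = chi c + chi c') ->
  exists n, N2 n /\ forall c, C c -> chi c = pairing n c.
Proof.
move=> hinv hadd.
have [||n [hn hall]] := @compact_fip G (G -> G -> Z) C N2
  (fun c => [set m | N2 m /\ pairing m c = chi c]) N2_compact.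
- move=> c hc; apply: (@closed_lc_preimage _ _ N2 (pairing^~ c) (eq^~ (chi c)) N2_closed).
  exact: pairing_lc.
- move=> k F hF; pose W u := exists m, N2 m /\ u = (fun i => pairing m (F i)).
  case: (pselect (W (fun i => chi (F i)))) => [[m [hm e]]|nW].
    by exists m; split=> // j; split=> //; rewrite (congr1 (fun t => t j) e).
  have [|||a [ha hv]] := separation pp (W := W) (v := fun i => chi (F i)).
  + by exists pone; split; [exact: N2_1|apply: funext => i; rewrite /pairing /charof subrr].
  + move=> _ _ [m [hm ->]] [m' [hm' ->]]; exists (pmul m m'); split; first exact: N2_M.
    by apply: funext => i; rewrite pairing_addl.
  + exact: nW.
  have [hC hchi] := C_lincomb hadd a hF.
  have hB m : N2 m -> pairing m (lincomb a F) = 0.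
    move=> hm; have [_ ->] := C_lincomb (fun c c' hc hc' => pairing_addr hm hc hc') a hF.
    by apply: ha; exists m.
  move: hv; rewrite -hchi (hinv _ _ hC C0 (pairing_nondeg_right hC hB)).
  by rewrite additive0 ?eqxx.
by exists n; split=> // c hc; have [_ ->] := hall c hc.
Qed.

(* The compact set {m ∈ N2 | ψ m ≠ 0} misses T(G), so finitely
   many representations ρ_i have no common zero on it; separating (1,0,…,0)
   from {(ψ m, (ζ ρ_i m)_i) | m ∈ N2} writes ψ on N2 as a combination of the
   characters ζ∘ρ_i, which combination_in_C realises. *)
Lemma pairing_surj_right (psi : G -> Z) :
  (forall n n', N2 n -> N2 n' -> psi (pmul n n') = psi n + psi n') ->
  (forall n, M n -> psi n = 0) ->
  (forall n, N2 n -> \forall m \near n, N2 m -> psi m = psi n) ->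
  exists c, C c /\ forall n, N2 n -> psi n = pairing n c.
Proof.
move=> hadd hM hlc.
pose K := [set m | N2 m /\ (fun z => z <> 0) (psi m)].
have cK : compact K.
  apply: (subclosed_compact _ (@p_compact G) (@subsetT _ K)).
  exact: (@closed_lc_preimage _ _ N2 psi (fun z => z <> 0) N2_closed hlc).
have [|k [F [hF noa]]] := @finite_reps K pone cK.
  move=> [m [[hm hpm] hT]]; apply/hpm/hM/M_T => // w Omw rho hrho.
  by rewrite (hT w Omw rho hrho) (chom1 hrho).
pose W u := exists m, N2 m /\ u = vcons (psi m) (fun i => rep_char (F i) m).
have [|||be [hbe hv]] := separation pp (W := W) (v := vcons 1 (fun _ => 0)).
- exists pone; split; first exact: N2_1.
  apply: vec_eqS; first by rewrite vcons0 hM //; exact/M_N1/N1_1.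
  by apply: funext => i; rewrite /vtail vconsS rep_char1.
- move=> _ _ [m [hm ->]] [m' [hm' ->]]; exists (pmul m m'); split; first exact: N2_M.
  apply: vec_eqS; first by rewrite !vcons0 hadd.
  by apply: funext => i; rewrite /vtail !vconsS rep_charM.
- move=> [m [hm e]]; apply: noa; exists m; split.
    split=> //; have := congr1 (fun t => t ord0) e; rewrite /= !vcons0 => <-.
    by apply/eqP; exact: oner_neq0.
  move=> i; have := congr1 (fun t => t (lift ord0 i)) e; rewrite /= !vconsS => e'.
  by rewrite (rep_char_iota (hF i) hm) -e' iota0 (chom1 (hF i).2).
move: hv; rewrite dot_vcons mulr1 dot0r addr0 => hb0.
pose al i := (be ord0)^-1 * vtail be i.
have hal m : N2 m -> dot al (fun i => rep_char (F i) m) = - psi m.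
  move=> hm; have := hbe _ (ex_intro _ m (conj hm erefl)); rewrite dot_vcons => e.
  rewrite /dot /al; under eq_bigr do rewrite -mulrA; rewrite -mulr_sumr -/(dot _ _).
  have -> : dot (vtail be) (fun i => rep_char (F i) m) = - (be ord0 * psi m).
    by apply/eqP; rewrite -addr_eq0 addrC e.
  by rewrite mulrN mulrA mulVr ?mul1r // Zp_unit.
have al_N1 m : N1 m -> dot al (fun i => rep_char (F i) m) = 0.
  by move=> hm; rewrite hal ?hM ?oppr0 //; [exact: M_N1|exact: N12].
have [hC hBn] := combination_in_C hF al_N1.
by exists (lincomb al (fun i => rep_cocycle (F i))); split=> // n hn; rewrite hBn // hal // opprK.
Qed.

(* The generators of H²(G/N2)_π2 and of H²(G/N1)_π1 are the same cocycles: a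
   homomorphism G -> Ū_ω killing N1 also kills N2 ⊆ T̄(G). *)
Lemma gen_N2_N1 h : gen Om N2 h -> gen Om N1 h.
Proof.
elim=> [|w rb c Omw [crb [kill lift]] _ IH]; first exact: gen0.
by apply: genS => //; split=> //; split=> // n hn; apply: kill; exact: N12.
Qed.

Lemma gen_N1_N2 h : gen Om N1 h -> gen Om N2 h.
Proof.
elim=> [|w rb c Omw [crb [_ lift]] _ IH]; first exact: gen0.
by apply: genS => //; split=> //; split=> // n hn; exact: (N2T hn Omw crb).
Qed.

Lemma gen_inv2 h : gen Om N2 h -> inv2 N2 h.
Proof.
elim=> [|w rb c Omw [crb [kill _]] _ IH] //.
by move=> x y n m hn hm; rewrite IH // /pullback !crb.1 (kill n hn) (kill m hm) !pmulr1.
Qed.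

Lemma inflation_H2pi :
  (forall f, H2pi Om N2 f -> H2pi Om N1 f) /\
  (forall f, H2pi Om N1 f -> exists f', H2pi Om N2 f' /\ cohom N1 f f').
Proof.
split=> [f [[lf [if2 cf]] [h [gh [k [lk [ik ek]]]]]]|f [_ [h [gh ch]]]].
  split; first by split=> //; split=> // x y n m hn hm; apply: if2; exact: N12.
  exists h; split; first exact: gen_N2_N1.
  by exists k; split=> //; split=> // x n hn; apply: ik; exact: N12.
have gh2 := gen_N1_N2 gh; exists h; split=> //; split.
  have [g0 [lg0 [eg0 _]]] := gen_trivialized gh2.
  split; first by rewrite (fext2 eg0); exact: lc2_cobound.
  by split; [exact: gen_inv2|rewrite (fext2 eg0); exact: cobound_cocycle].
by exists h; split=> //; exact: cohom_refl.
Qed.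

Lemma pairing_perfect : perfect_pairing Om N1 N2 pairing.
Proof.
split; first exact: pairing_wd_left.
split; first exact: pairing_wd_right.
split; first exact: pairing_addl.
split; first exact: pairing_addr.
split; first exact: pairing_lc.
split; first exact: pairing_nondeg_left.
split; first exact: pairing_surj_left.
split; first exact: pairing_nondeg_right.
exact: pairing_surj_right.
Qed.

End Pairing.

Theorem theorem7p1 (p : nat) (p_prime : prime p) (Om : ext p -> Prop)
  (Om_ne : exists w, Om w)
  (Om_I : forall w, Om w -> condI w) (Om_II : forall w, Om w -> condII w)
  (G : profinite) (N1 N2 : set G)
  (hN1 : closed_normal N1) (hN2 : closed_normal N2)
  (N12 : N1 `<=` N2) (N2T : N2 `<=` Tbar Om G) :
  ((forall f, H2pi Om N2 f -> H2pi Om N1 f) /\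
   (forall f, H2pi Om N1 f -> exists f', H2pi Om N2 f' /\ cohom N1 f f')) /\
  exists B : G -> (G -> G -> 'Z_p) -> 'Z_p, perfect_pairing Om N1 N2 B.
Proof.
split; first exact: inflation_H2pi.
by eexists; apply: pairing_perfect.
Qed.
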